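(* Let $G$ be a non-discrete compact group with normalized Haar measure $\nu$. For every neighborhood $U$ of the identity there exists a finite set $H\subseteq G$ such that (1) $HU=G$, and (2) for every $I\subseteq H$, $\nu(IU)\ge \frac{|I|}{|H|}$. *)

From HB Require Import structures.
From mathcomp Require Import all_boot all_order all_algebra.
From mathcomp Require Import finmap.
From mathcomp Require Import all_classical all_reals all_analysis.
Set Implicit Arguments. Unset Strict Implicit. Unset Printing Implicit Defensive.
Import Order.TTheory GRing.Theory Num.Theory.

Local Open Scope classical_set_scope.
Local Open Scope ring_scope.

Definition borel_of (G : ptopologicalType) := g_sigma_algebraType (@open G).

Definition topological_group (G : ptopologicalType)
    (mul : G -> G -> G) (inv : G -> G) (e : G) : Prop :=
  [/\ associative mul, left_id e mul, left_inverse e inv mul,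
      continuous (fun p : G * G => mul p.1 p.2) & continuous inv].

Definition compact_group (G : ptopologicalType)
    (mul : G -> G -> G) (inv : G -> G) (e : G) : Prop :=
  [/\ topological_group mul inv e, hausdorff_space G & compact [set: G]].

Definition non_discrete (G : ptopologicalType) : Prop :=
  ~ (forall A : set G, open A).

Definition normalized_haar (R : realType) (G : ptopologicalType)
    (mul : G -> G -> G) (nu : {measure set (borel_of G) -> \bar R}) : Prop :=
  [/\ nu [set: borel_of G] = 1%E,
      (forall (g : G) (A : set (borel_of G)), measurable A ->
          nu (mul g @` A) = nu A),
      (forall A : set (borel_of G), measurable A ->
          nu A = ereal_inf [set nu V | V in [set V : set G | open V /\ A `<=` V]])
    & (forall V : set G, open V ->
          nu V = ereal_sup [set nu K | K in [set K : set G | compact K /\ K `<=` V]])].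

Definition setmul (G : Type) (mul : G -> G -> G) (I U : set G) : set G :=
  [set mul i u | i in I & u in U].

From HB Require Import structures.
From mathcomp Require Import all_boot all_order all_algebra.
From mathcomp Require Import finmap.
From mathcomp Require Import all_classical all_reals all_analysis.
From mathcomp Require Import ring lra.
Import Order.TTheory GRing.Theory Num.Theory.
Set Implicit Arguments. Unset Strict Implicit. Unset Printing Implicit Defensive.

(* Take a symmetric neighbourhood W of e with W^8 included in U and a maximal
   family of pairwise disjoint translates g_j W; there are finitely many since
   nu W > 0.  By maximality the g_j W^2 cover G, which yields a Borel partition
   of G into cells B_j with g_j W ⊆ B_j ⊆ g_j W^2.  Link j and i when g_j^-1 g_i lies
   in W^5: a connected component of this graph is a union of cells stable under
   right multiplication by W, so any two components are translates of each
   other and carry the same mass m.  Choose a quantum u = m / n <= nu W and walk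
   a spanning forest from the leaves up: every cell keeps an integer number
   k_j >= 1 of quanta and hands its remainder to its parent; since each
   component has mass n u, nothing is left at the roots, and sum_j k_j u = 1.
   Put k_j distinct points of g_j W into H (G is not discrete).  Every cell
   containing a point of I, or whose parent does, is included in I U, and these
   cells carry mass at least |I| u = |I| / |H|. *)

Local Open Scope ring_scope.

Lemma natmul_rem_eq0 (R : realDomainType) (u x : R) (m n : nat) :
  0 <= x < u -> m%:R * u = n%:R * u - x -> x = 0.
Proof.
move=> /andP[x0 xu] mnx; have u0 : 0 < u := le_lt_trans x0 xu.
case: (ltngtP m n) => [mn|nm|mn]; last by move: mnx; rewrite mn; lra.
- have : m.+1%:R <= n%:R :> R by rewrite ler_nat.
  rewrite -natr1; nra.
- have : n.+1%:R <= m%:R :> R by rewrite ler_nat.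
  rewrite -natr1; nra.
Qed.

Section ForestTransport.
Variables (R : archiRealFieldType) (J : finType) (par : J -> option J).

Definition child_sum (f : J -> R) j := \sum_(c | par c == Some j) f c.

Lemma sum_child_sum (P : pred J) (f : J -> R) :
  \sum_(j | P j) child_sum f j = \sum_(c | oapp P false (par c)) f c.
Proof.
rewrite (exchange_big_dep xpredT) //= [RHS]big_mkcond; apply: eq_bigr => c _.
case: (par c) => [j0|] /=; last by rewrite big_pred0 // => j; rewrite andbF.
rewrite (eq_bigl (fun j => P j0 && (j == j0))) => [|j].
  by case: (P j0); [rewrite big_pred1_eq | rewrite big_pred0].
by rewrite eq_sym (inj_eq Some_inj); case: eqP => [->|]; rewrite ?andbF.
Qed.

(* Each vertex keeps [k j] quanta [u] of its weight [a j] plus the remainders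
   of its children, and passes its own remainder [f j] on to its parent. *)
Definition transported (u : R) (a f : J -> R) (k : J -> nat) :=
  forall j, (k j)%:R * u = a j - f j + child_sum f j.

Lemma exists_transport_on (d : J -> nat) (u : R) (S : {set J}) (a : J -> R) :
  (forall c j, par c = Some j -> (d j < d c)%N) -> 0 < u -> (forall j, u <= a j) ->
  exists k : J -> nat, exists f : J -> R, forall j, j \in S ->
    0 <= f j < u /\ (k j)%:R * u = a j - f j + \sum_(c in S | par c == Some j) f c.
Proof.
move=> par_d u0; move: {2}#|S| (leqnn #|S|) => n.
elim: n S a => [|n IH] S a szS ua.
  exists (fun _ => 0%N), (fun _ => 0) => j jS.
  by move: szS; rewrite leqn0 => /eqP/cards0_eq S0; rewrite S0 inE in jS.
have [->|[x0 x0S]] := set_0Vmem S.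
  by exists (fun _ => 0%N), (fun _ => 0) => j; rewrite inE.
have [x xS xmax] := @arg_maxnP J x0 (mem S) d x0S.
have {}xS : x \in S by [].
have childless : forall c, c \in S -> par c != Some x.
  move=> c cS; apply/eqP => /par_d; rewrite ltnNge.
  by have := xmax c cS; rewrite /= => ->.
have ax0 : 0 <= a x / u by rewrite divr_ge0 // (le_trans (ltW u0)).
set q := Num.truncn (a x / u); set fx := a x - q%:R * u.
have /andP[q_le lt_q] := truncn_itv ax0.
have fx_ge0 : 0 <= fx by rewrite subr_ge0 -ler_pdivlMr.
have fx_lt : fx < u.
  by rewrite /fx ltrBlDr -[X in _ < X + _]mul1r -mulrDl addrC natr1 -ltr_pdivrMr.
pose a' j := if par x == Some j then a j + fx else a j.
have ua' j : u <= a' j by rewrite /a'; case: ifP => _ //; rewrite (le_trans (ua j)) // lerDl.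
have szS' : (#|S :\ x| <= n)%N by move: szS; rewrite (cardsD1 x S) xS.
have [k [f kf]] := IH _ a' szS' ua'.
exists (fun j => if j == x then q else k j), (fun j => if j == x then fx else f j).
move=> j jS; have [->|jx] := eqVneq j x.
  rewrite fx_ge0 fx_lt big1 ?addr0; first by split=> //; rewrite /fx opprB addrC subrK.
  by move=> c /andP[cS /eqP pc]; have := childless c cS; rewrite pc eqxx.
have jS' : j \in S :\ x by rewrite in_setD1 jx.
have [fj_bd kj] := kf j jS'.
split=> //; rewrite big_mkcondr (big_setD1 x xS) /= -big_mkcondr eqxx.
rewrite (eq_bigr f) => [|c /andP[]]; last by rewrite in_setD1 => /andP[/negPf ->].
by rewrite kj /a'; case: (par x == Some j); rewrite ?add0r //; ring.
Qed.

Lemma exists_transport (d : J -> nat) (u : R) (a : J -> R) :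
  (forall c j, par c = Some j -> (d j < d c)%N) -> 0 < u -> (forall j, u <= a j) ->
  exists k f, transported u a f k /\ forall j, 0 <= f j < u.
Proof.
move=> par_d u0 ua; have [k [f kf]] := exists_transport_on [set: J]%SET par_d u0 ua.
exists k, f; split=> j; have [fj kj] := kf j (finset.in_setT j) => //.
by rewrite kj /child_sum; congr (_ + _); apply: eq_bigl => c; rewrite finset.in_setT.
Qed.

Lemma sum_transported (P : pred J) (u : R) (a f : J -> R) (k : J -> nat) :
  transported u a f k -> (forall c j, par c = Some j -> P c = P j) ->
  (\sum_(j | P j) k j)%:R * u =
    \sum_(j | P j) a j - \sum_(j | P j && (par j == None)) f j.
Proof.
move=> kaf Ppar; rewrite natr_sum mulr_suml (eq_bigr _ (fun j _ => kaf j)).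
rewrite !big_split /= sumrN sum_child_sum.
have -> : \sum_(c | oapp P false (par c)) f c = \sum_(c | P c && (par c != None)) f c.
  by apply: eq_bigl => c; case E: (par c) => [j|] /=; rewrite ?andbF ?andbT ?(Ppar _ _ E).
by rewrite [\sum_(j | P j) f j](bigID (fun j => par j == None)) /= opprD addrA subrK.
Qed.

Lemma transported_root_eq0 (P : pred J) (u : R) (a f : J -> R) (k : J -> nat) r n :
  transported u a f k -> (forall j, 0 <= f j < u) ->
  (forall c j, par c = Some j -> P c = P j) ->
  P r -> par r = None -> (forall j, P j -> par j = None -> j = r) ->
  \sum_(j | P j) a j = n%:R * u -> f r = 0.
Proof.
move=> kaf f_bd Ppar Pr pr Proot sum_a.
apply: (natmul_rem_eq0 (f_bd r) (_ : (\sum_(j | P j) k j)%:R * u = _)).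
rewrite (sum_transported kaf Ppar) sum_a (big_pred1 r) // => j.
by apply/andP/eqP => [[Pj /eqP/(Proot _ Pj)] | ->] //; rewrite Pr pr.
Qed.

Definition touched (cnt : J -> nat) i :=
  (0 < cnt i)%N || oapp (fun j => 0 < cnt j)%N false (par i).

Lemma transport_count_le (u : R) (a f : J -> R) (k cnt : J -> nat) :
  transported u a f k -> 0 <= u -> (forall j, 0 <= f j <= a j) ->
  (forall j, cnt j <= k j)%N ->
  (\sum_j cnt j)%:R * u <= \sum_(i | touched cnt i) a i.
Proof.
move=> kaf u0 f_bd cnt_k; pose occ j := (0 < cnt j)%N.
have cnt_le : (\sum_j cnt j)%:R * u <= \sum_(j | occ j) (k j)%:R * u.
  rewrite natr_sum mulr_suml [X in _ <= X]big_mkcond; apply: ler_sum => j _.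
  rewrite /occ; case: (cnt j) (cnt_k j) => [|m] km; first by rewrite mul0r.
  by rewrite ler_wpM2r // ler_nat.
apply: (le_trans cnt_le); rewrite (eq_bigr _ (fun j _ => kaf j)) big_split /=.
rewrite sum_child_sum big_mkcond [X in _ + X]big_mkcond [X in _ <= X]big_mkcond.
rewrite -big_split /=; apply: ler_sum => i _; rewrite /touched /occ.
have /andP[f0 fa] := f_bd i.
case: (par i) => [j|] /=; case: (0 < cnt i)%N => /=; try case: (0 < cnt j)%N; lra.
Qed.

End ForestTransport.

Local Notation root := fingraph.root.

Lemma exists_spanning_forest (J : finType) (adj : rel J) : symmetric adj ->
  exists par : J -> option J, exists d : J -> nat,
   (forall c j, par c = Some j -> adj c j /\ (d j < d c)%N) /\
   (forall j, par j = None -> root adj j = j).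
Proof.
move=> adj_sym; have cs := sym_connect_sym adj_sym.
pose P x n := [exists t : n.-tuple J,
  path adj (root adj x) t && (last (root adj x) t == x)].
have P_ex x : exists n, P x n.
  have : connect adj (root adj x) x by rewrite cs connect_root.
  case/connectP => p pp lp; exists (size p); apply/existsP; exists (in_tuple p).
  by rewrite pp /= -lp eqxx.
pose d x := ex_minn (P_ex x).
have descend x : x != root adj x -> exists y, adj x y && (d y < d x)%N.
  move=> xr; rewrite /d; case: ex_minnP => n /existsP[t /andP[pt lt]] minP.
  move: pt lt; case/lastP: (tval t) (size_tuple t) => [|q z] sz pt lt.
    by move: lt; rewrite /= eq_sym (negPf xr).
  move: lt; rewrite last_rcons => /eqP zx; subst z.
  move: pt; rewrite rcons_path => /andP[pq ay].
  set y := last (root adj x) q in ay.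
  have ryx : root adj y = root adj x.
    by apply/fingraph.rootP => //; rewrite cs; apply: connect1; rewrite adj_sym.
  exists y; rewrite adj_sym ay /=; case: ex_minnP => m _ minPy.
  have Py : P y (size q) by apply/existsP; exists (in_tuple q); rewrite ryx pq /=.
  by move: (minPy _ Py) sz; rewrite size_rcons => le_m <-; apply: leq_ltn_trans le_m _.
pose par x := if x == root adj x then None else [pick y | adj x y && (d y < d x)%N].
exists par, d; split=> [c j|j]; rewrite /par.
  by case: ifP => // _; case: pickP => // y /andP[h1 h2] [<-].
case: ifP => [/eqP <-|/negbT jr] //; case: pickP => // none _.
by have [y yP] := descend _ jr; move: (none y); rewrite yP.
Qed.




Lemma exists_fair_quota (R : archiRealFieldType) (J : finType) (adj : rel J)
    (a : J -> R) (beta : R) :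
  symmetric adj -> 0 < beta -> (forall j, beta <= a j) -> \sum_j a j = 1 ->
  (forall r r', \sum_(j | root adj j == root adj r) a j =
                \sum_(j | root adj j == root adj r') a j) ->
  exists par : J -> option J, exists k : J -> nat,
    [/\ forall c j, par c = Some j -> adj c j,
        forall j, (0 < k j)%N &
        forall cnt : J -> nat, (forall j, cnt j <= k j)%N ->
          (\sum_j cnt j)%:R / (\sum_j k j)%:R <= \sum_(i | touched par cnt i) a i].
Proof.
move=> adj_sym beta0 beta_a sum_a1 comp_eq.
have [par [d [par_adj root_par]]] := exists_spanning_forest adj_sym.
have par_root c j : par c = Some j -> root adj c = root adj j.
  move=> /par_adj[cj _]; apply/esym/(fingraph.rootP (sym_connect_sym adj_sym)).
  by rewrite connect1 // adj_sym.
have [j0 _|J0] := pickP (fun _ : J => true); last first.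
  by move: sum_a1; rewrite big_pred0 // => /eqP; rewrite eq_sym oner_eq0.
pose comp_mass := \sum_(j | root adj j == root adj j0) a j.
have comp_mass_gt0 : 0 < comp_mass.
  rewrite /comp_mass (bigD1 j0) //=; apply: (lt_le_trans beta0).
  by rewrite (le_trans (beta_a j0)) // lerDl sumr_ge0 // => j _; exact: le_trans (ltW beta0) _.
pose n := (Num.truncn (comp_mass / beta)).+1; pose u := comp_mass / n%:R.
have u_gt0 : 0 < u by rewrite divr_gt0.
have u_le : u <= beta.
  have /andP[_ lt_n] := truncn_itv (ltW (divr_gt0 comp_mass_gt0 beta0)).
  by rewrite /u ler_pdivrMr // mulrC -ler_pdivrMr // ltW.
have u_a j : u <= a j := le_trans u_le (beta_a j).
have [k [f [kaf f_bd]]] := exists_transport (fun c j h => (par_adj c j h).2) u_gt0 u_a.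
have f_root0 r : par r = None -> f r = 0.
  move=> pr; have rr : root adj r = r := root_par _ pr.
  apply: (transported_root_eq0 (P := fun j => root adj j == r) (n := n)) kaf f_bd _ _ pr
    _ _ => /=.
  - by move=> c j /par_root ->.
  - by rewrite rr.
  - by move=> j /eqP <- /root_par.
  by rewrite -{1}rr (comp_eq r j0) -/comp_mass /u mulrC divfK ?gt_eqF.
have total : (\sum_j k j)%:R * u = 1.
  rewrite (sum_transported (P := xpredT) kaf) // sum_a1 big1 ?subr0 //.
  by move=> i /eqP; apply: f_root0.
have k_gt0 j : (0 < k j)%N.
  rewrite lt0n; apply/eqP => kj0; have := kaf j; rewrite kj0 mul0r.
  have : 0 <= child_sum par f j by apply: sumr_ge0 => c _; case/andP: (f_bd c).
  by have := u_a j; have /andP[_] := f_bd j; lra.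
have K_neq0 : (\sum_j k j)%:R != 0 :> R.
  by apply: contra_eqN total => /eqP ->; rewrite mul0r eq_sym oner_eq0.
exists par, k; split=> [c j /par_adj[] // | // | cnt cnt_k].
have -> : (\sum_j k j)%:R^-1 = u :> R by rewrite -[RHS](mulKf K_neq0) total mulr1.
apply: transport_count_le kaf (ltW u_gt0) _ cnt_k => j.
by have /andP[-> /ltW fu] := f_bd j; exact: le_trans fu (u_a j).
Qed.

Local Open Scope classical_set_scope.

Lemma bigsetU_ordP (T : Type) n (P : pred 'I_n) (F : 'I_n -> set T) x :
  (\big[setU/set0]_(i < n | P i) F i) x <-> exists2 i, P i & F i x.
Proof.
rewrite -bigcup_seq_cond; split; first by case=> i /= /andP[_ Pi] Fi; exists i.
by case=> i Pi Fi; exists i => //=; rewrite mem_index_enum.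
Qed.

Lemma card_fsetI_bigfcup (T : choiceType) (J : eqType) (F : J -> {fset T})
    (I : {fset T}) (r : seq J) :
  (forall i j, i != j -> [disjoint F i & F j]%fset) -> uniq r ->
  #|` I `&` \bigcup_(j <- r) F j|%fset = (\sum_(j <- r) #|` I `&` F j|%fset)%N.
Proof.
move=> disjF; elim: r => [|j r IH] /=; first by rewrite !big_nil fsetI0 cardfs0.
case/andP => jr ur; rewrite !big_cons fsetIUr cardfsU IH //.
rewrite (_ : (I `&` F j) `&` (I `&` \bigcup_(i <- r) F i) = fset0)%fset ?cardfs0 ?subn0 //.
apply/eqP; rewrite fsetI_eq0; apply: fdisjointWl (fsubsetIr _ _) _.
apply: fdisjointWr (fsubsetIr _ _) _; rewrite fdisjoint_sym.
apply/fdisjointP => x /bigfcupP[i /andP[ir _] xi]; apply/negP => xj.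
have ij : i != j by apply: contraNneq jr => <-.
by move: (disjF _ _ ij) => /fdisjointP/(_ x xi); rewrite xj.
Qed.

Lemma open_measurable (T : ptopologicalType) (A : set T) :
  open A -> measurable (A : set (borel_of T)).
Proof. exact: sub_sigma_algebra. Qed.

Lemma closed_fset (T : ptopologicalType) (F : {fset T}) :
  hausdorff_space T -> closed [set` F].
Proof.
move=> hT; rewrite (_ : [set` F] = \bigcup_(i in [set` F]) [set i]).
  apply: closed_bigcup => [|i _]; first exact: finite_fset.
  exact: (@accessible_closed_set1 _ (hausdorff_accessible hT) i).
by apply/seteqP; split=> y /=; [exists y | case=> z zF ->].
Qed.

Section TopologicalGroup.
Variables (G : ptopologicalType) (mul : G -> G -> G) (inv : G -> G) (e : G).
Hypotheses (mulA : associative mul) (mul1g : left_id e mul)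
  (mulVg : left_inverse e inv mul).

Lemma mulKg x y : mul (inv x) (mul x y) = y.
Proof. by rewrite mulA mulVg mul1g. Qed.

Lemma mulgV x : mul x (inv x) = e.
Proof.
by rewrite -[mul x _]mul1g -{1}(mulVg (inv x)) -mulA (mulA (inv x)) mulVg mul1g mulVg.
Qed.

Lemma mulg1 x : mul x e = x.
Proof. by rewrite -(mulVg x) mulA mulgV mul1g. Qed.

Lemma mulKVg x y : mul x (mul (inv x) y) = y.
Proof. by rewrite mulA mulgV mul1g. Qed.

Lemma invgK x : inv (inv x) = x.
Proof. by rewrite -[inv (inv x)]mulg1 -(mulVg x) mulKg. Qed.

Lemma invg1 : inv e = e.
Proof. by rewrite -[inv e]mulg1 mulVg. Qed.

Lemma invg_eq x y : mul x y = e -> inv x = y.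
Proof. by move=> xy; rewrite -(mulKg x y) xy mulg1. Qed.

Lemma invgM x y : inv (mul x y) = mul (inv y) (inv x).
Proof. by apply: invg_eq; rewrite -mulA (mulA y) mulgV mul1g mulgV. Qed.

Fixpoint setpow (W : set G) n : set G :=
  if n is n'.+1 then [set mul w y | w in W & y in setpow W n'] else [set e].

Lemma setpowD W n m x y : setpow W n x -> setpow W m y -> setpow W (n + m) (mul x y).
Proof.
elim: n x => [|n IH] x /=; first by move=> -> ?; rewrite mul1g.
by case=> w Ww [x' x'n <-] ym; exists w => //; exists (mul x' y); [exact: IH | exact: mulA].
Qed.

Lemma setpow1 W w : W w -> setpow W 1 w.
Proof. by move=> Ww; exists w => //; exists e; rewrite ?mulg1. Qed.

Lemma setpowV W : (forall w, W w -> W (inv w)) ->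
  forall n x, setpow W n x -> setpow W n (inv x).
Proof.
move=> WV; elim=> [|n IH] x; first by move=> /= ->; rewrite invg1.
case=> w Ww [y yn <-]; rewrite invgM -addn1.
by apply: setpowD; [exact: IH | exact/setpow1/WV].
Qed.

Lemma setpow_le W n m x : W e -> (n <= m)%N -> setpow W n x -> setpow W m x.
Proof.
move=> We /subnKC <-; elim: (m - n)%N => [|k IH] xn; first by rewrite addn0.
by rewrite addnS; exists e => //; exists x; [exact: IH | exact: mul1g].
Qed.

Lemma setpow_double W V : (forall a b, W a -> W b -> V (mul a b)) ->
  forall n x, setpow W n.*2 x -> setpow V n x.
Proof.
move=> WWV; elim=> [|n IH] x //; rewrite doubleS /=.
case=> w1 Ww1 [_ [w2 Ww2 [y yn <-]] <-].
by exists (mul w1 w2); [exact: WWV | exists y; [exact: IH | exact/esym/mulA]].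
Qed.

Hypotheses (mul_cont : continuous (fun p : G * G => mul p.1 p.2))
  (inv_cont : continuous inv).

Definition translate g (A : set G) := mul g @` A.

Lemma translateE g A : translate g A = mul (inv g) @^-1` A.
Proof.
apply/seteqP; split=> x /=; first by case=> y Ay <-; rewrite mulKg.
by move=> Ax; exists (mul (inv g) x); rewrite ?mulKVg.
Qed.

Lemma continuous_lmul g : continuous (mul g).
Proof.
move=> x; apply: (@continuous_comp _ _ _ (pair g) (fun p : G * G => mul p.1 p.2)).
  by apply: cvg_pair; [exact: cvg_cst | exact: cvg_id].
exact: mul_cont.
Qed.

Lemma open_translate g A : open A -> open (translate g A).
Proof. by rewrite translateE; move/continuousP: (@continuous_lmul (inv g)); apply. Qed.

Lemma open_setmul (A U : set G) : open U -> open (setmul mul A U).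
Proof.
move=> oU; rewrite (_ : setmul _ _ _ = \bigcup_(h in A) translate h U).
  by apply: bigcup_open => h _; exact: open_translate.
by apply/seteqP; split=> x [h Ah [y Uy <-]]; exists h => //; exists y.
Qed.

Lemma open_setpow2 W : open W -> open (setpow W 2).
Proof.
move=> oW; rewrite (_ : setpow W 2 = \bigcup_(w in W) translate w W).
  by apply: bigcup_open => w _; exact: open_translate.
apply/seteqP; split=> x /=.
  by case=> w1 Ww1 [_ [w2 Ww2 [_ -> <-]] <-]; exists w1 => //; exists w2; rewrite ?mulg1.
by case=> w1 Ww1 [w2 Ww2 <-]; exists w1 => //; exists w2 => //; exact: setpow1.
Qed.

Lemma exists_sym_nbhs_sq U : open U -> U e -> exists W : set G,
  [/\ open W, W e, (forall w, W w -> W (inv w)) &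
      forall a b, W a -> W b -> U (mul a b)].
Proof.
move=> oU Ue; have : nbhs (mul (e, e).1 (e, e).2) U by rewrite /= mul1g; exact: open_nbhs_nbhs.
case/mul_cont => -[A B] /= [nA nB] sAB.
have : nbhs e (A `&` B) by apply: filterI.
rewrite nbhsE => -[W0 [oW0 W0e] W0AB].
exists (W0 `&` inv @^-1` W0); split.
- by apply: openI => //; move/continuousP: inv_cont; apply.
- by split => //=; rewrite invg1.
- by move=> w [W0w W0w']; split => //=; rewrite invgK.
move=> a b [/W0AB[Aa _] _] [/W0AB[_ Bb] _]; exact: (sAB (a, b)).
Qed.

Lemma exists_fresh_point (O : set G) x (F : {fset G}) :
  hausdorff_space G -> non_discrete G -> open O -> O x -> exists2 y, O y & y \notin F.
Proof.
move=> hG nd oO Ox; apply: contrapT => noy.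
have OF y : O y -> y \in F by move=> Oy; apply: contrapT => /negP yF; apply: noy; exists y.
have ox : open [set x].
  rewrite (_ : [set x] = O `&` ~` [set` (F `\ x)%fset]).
    by apply: openI => //; rewrite openC; exact: closed_fset.
  apply/seteqP; split=> y /=; first by move=> ->; split=> //=; rewrite !inE eqxx.
  by case=> Oy; rewrite /= !inE (OF _ Oy) andbT => /negP; rewrite negbK => /eqP.
apply: nd => A; rewrite (_ : A = \bigcup_(a in A) translate (mul a (inv x)) [set x]).
  by apply: bigcup_open => a _; exact: open_translate.
apply/seteqP; split=> y /=.
  by move=> Ay; exists y => //; exists x => //; rewrite -mulA mulVg mulg1.
by case=> a Aa [_ -> <-]; rewrite -mulA mulVg mulg1.
Qed.

Lemma exists_fset_in_open (O : set G) x k :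
  hausdorff_space G -> non_discrete G -> open O -> O x ->
  exists F : {fset G}, #|` F| = k /\ forall y, y \in F -> O y.
Proof.
move=> hG nd oO Ox; elim: k => [|k [F [cardF FO]]].
  by exists fset0; split=> [|y]; rewrite ?cardfs0 ?inE.
have [y Oy yF] := exists_fresh_point F hG nd oO Ox.
exists (y |` F)%fset; split; first by rewrite cardfsU1 yF cardF.
by move=> z /fset1UP[->|/FO].
Qed.

Section HaarMeasure.
Variables (R : realType) (nu : {measure set (borel_of G) -> \bar R}).
Hypotheses (nuT : nu [set: borel_of G] = 1%E)
  (nu_translate : forall g (A : set (borel_of G)), measurable A -> nu (mul g @` A) = nu A).

Lemma fin_num_nu (A : set (borel_of G)) : measurable A -> nu A \is a fin_num.
Proof.
move=> mA; have : (nu A <= nu [set: borel_of G])%E by apply: le_measure; rewrite ?inE.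
by rewrite ge0_fin_numE // nuT => /le_lt_trans; apply; rewrite ltey.
Qed.

Lemma fineK_nu (A : set (borel_of G)) : measurable A -> (fine (nu A))%:E = nu A.
Proof. by move=> mA; rewrite fineK // fin_num_nu. Qed.

Lemma nu_open_gt0 (W : set G) : compact [set: G] -> open W -> W e -> 0 < fine (nu W).
Proof.
move=> cG oW We; have mW := open_measurable oW.
rewrite lt_def fine_ge0 ?measure_ge0 // andbT; apply/eqP => nuW0.
have {}nuW0 : nu W = 0%E by rewrite -fineK_nu // nuW0.
have cover_G : [set: G] `<=` \bigcup_(x in [set: G]) translate x W.
  by move=> x _; exists x => //; exists e; rewrite ?mulg1.
move: cG; rewrite compact_cover => cG.
have [D _ DW] := cG G setT (translate^~ W) (fun x _ => @open_translate x W oW) cover_G.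
have : (nu [set: borel_of G] <= \sum_(x \in [set` D]) nu (translate x W))%E.
  apply: (content_sub_fsum _ (finite_fset D)) => // x _.
  by apply: open_measurable; exact: open_translate.
rewrite fsbig1 => [|x _]; last by rewrite /translate nu_translate.
by rewrite nuT lee_fin ler10.
Qed.

Lemma packing_card_le (W : set G) n (g : 'I_n -> G) : open W ->
  (forall i j, i != j -> translate (g i) W `&` translate (g j) W = set0) ->
  n%:R * fine (nu W) <= 1.
Proof.
move=> oW disj; have mW := open_measurable oW.
have mgW i : measurable (translate (g i) W : set (borel_of G)).
  by apply: open_measurable; exact: open_translate.
have tW : trivIset (fun i : 'I_n => true) (fun i => translate (g i) W).
  move=> i j _ _ [x Wx]; apply: contrapT => /eqP ij.
  by move: Wx; rewrite (disj _ _ ij).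
have : (nu (\big[setU/set0]_(i < n) translate (g i) W) <= nu [set: borel_of G])%E.
  by apply: le_measure; rewrite ?inE //; exact: bigsetU_measurable.
rewrite (measure_bigsetU_ord_cond _ (fun i _ => mgW i) tW) nuT.
rewrite (eq_bigr (fun _ => (fine (nu W))%:E)) => [|i _]; last first.
  by rewrite -(nu_translate (g i) mW) fineK_nu //; exact: mgW.
by rewrite sumEFin lee_fin sumr_const card_ord mulr_natl.
Qed.

Lemma exists_maximal_packing (W : set G) : compact [set: G] -> open W -> W e ->
  exists s (g : 'I_s -> G),
    (forall i j, i != j -> translate (g i) W `&` translate (g j) W = set0) /\
    (forall x, exists j, translate x W `&` translate (g j) W !=set0).
Proof.
move=> cG oW We; have nuW_gt0 := nu_open_gt0 cG oW We.
pose packable n := `[< exists g : nat -> G, forall i j, (i < n)%N -> (j < n)%N ->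
  i != j -> translate (g i) W `&` translate (g j) W = set0 >].
have packable0 : packable 0%N by apply/asboolP; exists (fun _ => e).
have packable_le n : packable n -> (n <= Num.truncn (fine (nu W))^-1)%N.
  move=> /asboolP[g disj]; rewrite truncn_ge_nat ?invr_ge0 ?(ltW nuW_gt0) //.
  have := @packing_card_le W n (fun i => g i) oW
    (fun i j ij => disj i j (ltn_ord i) (ltn_ord j) ij).
  by rewrite -ler_pdivlMr // mul1r.
have [n /asboolP[g disj] nmax] := ex_maxnP (ex_intro _ 0%N packable0) packable_le.
exists n, (fun i => g i); split=> [i j ij|x]; first exact: disj.
apply: contrapT => nomeet.
have x_disj j : (j < n)%N -> translate x W `&` translate (g j) W = set0.
  move=> jn; apply/seteqP; split=> // y xjy; apply: nomeet; exists (Ordinal jn); exists y.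
  exact: xjy.
have : packable n.+1.
  apply/asboolP; exists (fun i => if (i < n)%N then g i else x) => i j.
  rewrite !ltnS; case: (ltnP i n) => [ilt|nle]; case: (ltnP j n) => [jlt|nlej] ile jle ij.
  - exact: disj.
  - by rewrite setIC x_disj.
  - by rewrite x_disj.
  - by case/negP: ij; rewrite eqn_leq (leq_trans ile nlej) (leq_trans jle nle).
by move/nmax; rewrite ltnn.
Qed.

Section Cells.
Variables (W U : set G) (s : nat) (g : 'I_s -> G).
Hypotheses (oW : open W) (We : W e) (WV : forall w, W w -> W (inv w))
  (W8U : setpow W 8 `<=` U).
Hypotheses
  (packing_disj : forall i j, i != j -> translate (g i) W `&` translate (g j) W = set0)
  (packing_max : forall x, exists j, translate x W `&` translate (g j) W !=set0).

Definition core j := translate (g j) W.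
Definition halo j := translate (g j) (setpow W 2).
Definition claimed (j : 'I_s) :=
  \bigcup_(i in [set i : 'I_s | (i < j)%N]) halo i `|` \bigcup_(i in [set: 'I_s]) core i.
Definition cell j := core j `|` (halo j `\` claimed j).

Lemma setpow2W w : W w -> setpow W 2 w.
Proof. by move=> /setpow1; apply: setpow_le. Qed.

Lemma core_cell j : core j `<=` cell j.
Proof. by move=> x; left. Qed.

Lemma cell_halo j : cell j `<=` halo j.
Proof. by move=> x [[w Ww <-]|[]] //; exists w => //; exact: setpow2W. Qed.

Lemma cell_center j : cell j (g j).
Proof. by apply: core_cell; exists e; rewrite ?mulg1. Qed.

Lemma open_halo j : open (halo j).
Proof. exact/open_translate/open_setpow2. Qed.

Lemma cell_disj i j : i != j -> cell i `&` cell j = set0.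
Proof.
move=> ij; apply/seteqP; split=> // x [celli cellj].
have unclaimed k m : core k x -> ~ (halo m x /\ ~ claimed m x).
  by move=> corex [_]; apply; right; exists k.
case: celli => [corei|[halo_i unclaimed_i]]; case: cellj => [corej|[halo_j unclaimed_j]].
- by rewrite -(packing_disj ij); split.
- by case: (unclaimed i j corei).
- by case: (unclaimed j i corej).
case: (ltngtP i j) => ij'.
- by apply: unclaimed_j; left; exists i.
- by apply: unclaimed_i; left; exists j.
- by move: ij; rewrite (val_inj ij') eqxx.
Qed.

Lemma cell_cover x : exists j, cell j x.
Proof.
have [[j corej]|nocore] := pselect (exists j, core j x); first by exists j; left.
have halo_ex : exists n, `[< exists2 j : 'I_s, nat_of_ord j = n & halo j x >].
  have [j [y [[w Ww xw] [w' Ww' gw]]]] := packing_max x.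
  exists j; apply/asboolP; exists j => //; exists (mul w' (inv w)).
    by apply: (@setpowD _ 1 1); apply: setpow1 => //; exact: WV.
  by rewrite mulA gw -xw -mulA mulgV mulg1.
case: (ex_minnP halo_ex) => n /asboolP[j jn haloj] minn.
exists j; right; split=> //.
case=> [[i /= ij haloi]|[i _ corei]]; last by apply: nocore; exists i.
have : (n <= i)%N by apply: minn; apply/asboolP; exists i.
by rewrite -jn leqNgt ij.
Qed.

Definition linked : rel 'I_s := fun i j => `[< setpow W 5 (mul (inv (g i)) (g j)) >].

Lemma linked_sym : symmetric linked.
Proof.
move=> i j; apply/asboolP/asboolP => /(setpowV WV); by rewrite invgM invgK.
Qed.

Lemma linked_refl j : linked j j.
Proof. by apply/asboolP; rewrite mulVg; apply: (@setpow_le _ 0). Qed.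

Lemma linked_cell_mul j i a w : cell j a -> W w -> cell i (mul a w) -> linked j i.
Proof.
move=> /cell_halo[y1 Y1 <-] Ww /cell_halo[y2 Y2 gy2]; apply/asboolP.
have -> : g i = mul (mul (mul (g j) y1) w) (inv y2) by rewrite -gy2 -mulA mulgV mulg1.
rewrite -!mulA mulKg; apply: (@setpowD _ 2 3) => //.
by apply: (@setpowD _ 1 2); [exact: setpow1 | exact: setpowV].
Qed.

Lemma cell_sub_translate c j h : linked c j -> core j h -> cell c `<=` translate h U.
Proof.
move=> /asboolP cj [w Ww <-] _ /cell_halo[y Yy <-].
exists (mul (inv (mul (g j) w)) (mul (g c) y)); last by rewrite mulKVg.
apply: W8U; rewrite invgM -mulA (mulA (inv (g j))).
have jc : setpow W 5 (mul (inv (g j)) (g c)) by have := setpowV WV cj; rewrite invgM invgK.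
by apply: (@setpowD _ 1 7); [exact/setpow1/WV | exact: (@setpowD _ 5 2)].
Qed.

Definition chained x y := exists n, setpow W n (mul (inv x) y).

Lemma chained_trans x y z : chained x y -> chained y z -> chained x z.
Proof.
by move=> [n xy] [m yz]; exists (n + m); have := setpowD xy yz; rewrite -mulA mulKVg.
Qed.

Lemma chained_linked_cells j i a b : linked j i -> cell j a -> cell i b -> chained a b.
Proof.
move=> /asboolP ji /cell_halo[y1 Y1 <-] /cell_halo[y2 Y2 <-].
exists (2 + (5 + 2))%N; rewrite invgM -mulA (mulA (inv (g j))).
by apply: setpowD; [exact: setpowV | exact: setpowD].
Qed.

Lemma chained_connect_cells j i a b :
  connect linked j i -> cell j a -> cell i b -> chained a b.
Proof.
move=> /connectP[p pp ->]; elim: p j a pp => [|z p IH] j a /= pp ja ib.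
  exact: chained_linked_cells (linked_refl j) ja ib.
case/andP: pp => jz pz.
apply: chained_trans (chained_linked_cells jz ja (cell_center z)) _.
exact: IH _ _ pz (cell_center z) ib.
Qed.

Definition component j := \big[setU/set0]_(i < s | root linked i == root linked j) cell i.

Lemma componentP j x :
  component j x <-> exists2 i, root linked i == root linked j & cell i x.
Proof. exact: bigsetU_ordP. Qed.

Lemma root_linked j i : linked j i -> root linked i = root linked j.
Proof.
by move=> ji; apply/esym/(fingraph.rootP (sym_connect_sym linked_sym)); exact: connect1.
Qed.

Lemma component_mulW j a w : component j a -> W w -> component j (mul a w).
Proof.
move=> /componentP[i ij ia] Ww; have [k kaw] := cell_cover (mul a w).
by apply/componentP; exists k; rewrite // (root_linked (linked_cell_mul ia Ww kaw)).
Qed.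

Lemma component_chained j a x : component j a -> chained a x -> component j x.
Proof.
move=> ja [n]; elim: n a ja => [|n IH] a ja /=.
  by move=> /(congr1 (mul a)); rewrite mulKVg mulg1 => ->.
case=> w Ww [y yn wy]; apply: (IH (mul a w)); first exact: component_mulW.
by rewrite invgM -mulA -wy mulKg.
Qed.

Lemma chained_component j a b : component j a -> component j b -> chained a b.
Proof.
move=> /componentP[i /eqP ij ia] /componentP[k /eqP kj kb].
apply: chained_connect_cells ia kb.
by apply/(fingraph.rootP (sym_connect_sym linked_sym)); rewrite ij kj.
Qed.

Lemma component_center j : component j (g j).
Proof. by apply/componentP; exists j; last exact: cell_center. Qed.

Lemma component_translate i j :
  component j = translate (mul (g j) (inv (g i))) (component i).
Proof.
rewrite translateE; apply/seteqP; split=> x /=.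
  move=> jx; apply: (component_chained (component_center i)).
  have [n gjx] := chained_component (component_center j) jx.
  by exists n; rewrite invgM invgK -mulA mulKg.
move=> ix; apply: (component_chained (component_center j)).
have [n gix] := chained_component (component_center i) ix.
by exists n; move: gix; rewrite invgM invgK -mulA mulKg.
Qed.

Definition mass j := fine (nu (cell j)).

Lemma measurable_cell j : measurable (cell j : set (borel_of G)).
Proof.
apply: measurableU; first by apply: open_measurable; exact: open_translate.
apply: measurableD; apply: open_measurable; first exact: open_halo.
by apply: openU; apply: bigcup_open => i _; [exact: open_halo | exact: open_translate].
Qed.

Lemma nu_bigsetU_cell (P : pred 'I_s) :
  nu (\big[setU/set0]_(i < s | P i) cell i) = (\sum_(i | P i) mass i)%:E.
Proof.
rewrite measure_bigsetU_ord_cond => [|i _|i j _ _ [x [ix jx]]]; last first.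
- apply: contrapT => /eqP ij; have : (cell i `&` cell j) x by split.
  by rewrite cell_disj.
- exact: measurable_cell.
by rewrite -sumEFin; apply: eq_bigr => i _; rewrite /mass fineK_nu //; exact: measurable_cell.
Qed.

Lemma sum_mass : \sum_j mass j = 1.
Proof.
apply: EFin_inj; rewrite -nu_bigsetU_cell -nuT; congr (nu _).
by apply/seteqP; split=> // x _; apply/bigsetU_ordP; have [j jx] := cell_cover x; exists j.
Qed.

Lemma nuW_le_mass j : fine (nu W) <= mass j.
Proof.
have mW := open_measurable oW.
have : (nu (translate (g j) W) <= nu (cell j))%E.
  apply: le_measure; rewrite ?inE; last exact: core_cell.
    by apply: open_measurable; exact: open_translate.
  exact: measurable_cell.
rewrite /translate nu_translate // -lee_fin fineK_nu // /mass fineK_nu //.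
exact: measurable_cell.
Qed.

Lemma component_mass_eq i j : \sum_(k | root linked k == root linked i) mass k =
                              \sum_(k | root linked k == root linked j) mass k.
Proof.
apply: EFin_inj; rewrite -!nu_bigsetU_cell -/(component i) -/(component j).
rewrite (component_translate i j) /translate nu_translate //.
by apply: bigsetU_measurable => k _; exact: measurable_cell.
Qed.

Lemma exists_points_in_cores (k : 'I_s -> nat) : hausdorff_space G -> non_discrete G ->
  exists Fs : 'I_s -> {fset G}, forall j, #|` Fs j| = k j /\ forall y, y \in Fs j -> core j y.
Proof.
move=> hG nd; apply: (@fin_all_exists _ (fun _ => {fset G})
  (fun j F => #|` F| = k j /\ forall y, y \in F -> core j y)) => j.
by apply: exists_fset_in_open hG nd (open_translate (g j) oW) _; exists e; rewrite ?mulg1.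
Qed.

Lemma touched_cells_sub (par : 'I_s -> option 'I_s) (Fs : 'I_s -> {fset G}) (I : {fset G}) :
  (forall c j, par c = Some j -> linked c j) -> (forall j y, y \in Fs j -> core j y) ->
  \big[setU/set0]_(i < s | touched par (fun j => #|` I `&` Fs j|%fset) i) cell i
    `<=` setmul mul [set` I] U.
Proof.
move=> par_linked Fs_core x /bigsetU_ordP[i touched_i ix].
have covered j : linked i j -> (0 < #|` I `&` Fs j|%fset)%N -> setmul mul [set` I] U x.
  move=> ij; rewrite cardfs_gt0 => /fset0Pn[h]; rewrite inE => /andP[hI hj].
  by have [y Uy <-] := cell_sub_translate ij (Fs_core _ _ hj) ix; exists h => //; exists y.
case/orP: touched_i => [/covered|]; first by apply; exact: linked_refl.
by case E: (par i) => [j|] //; apply: covered; exact: par_linked.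
Qed.

Lemma exists_fair_cover :
  compact [set: G] -> hausdorff_space G -> non_discrete G -> open U ->
  exists H : {fset G}, setmul mul [set` H] U = [set: G] /\
    forall I : {fset G}, (I `<=` H)%fset ->
      ((#|` I|%:R / #|` H|%:R)%:E <= nu (setmul mul [set` I] U))%E.
Proof.
move=> cG hG nd oU.
have [par [k [par_linked k_gt0 quota]]] := exists_fair_quota linked_sym
  (nu_open_gt0 cG oW We) nuW_le_mass sum_mass component_mass_eq.
have [Fs FsP] := exists_points_in_cores k hG nd.
have Fs_core j : forall y, y \in Fs j -> core j y := (FsP j).2.
have Fs_disj i j : i != j -> [disjoint Fs i & Fs j]%fset.
  move=> ij; apply/fdisjointP => y /Fs_core yi; apply/negP => /Fs_core yj.
  have : (core i `&` core j) y by split.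
  by rewrite /core packing_disj.
pose H := (\bigcup_(j <- index_enum 'I_s) Fs j)%fset.
have card_split I : (I `<=` H)%fset -> #|` I| = (\sum_j #|` I `&` Fs j|%fset)%N.
  by move=> IH; rewrite -card_fsetI_bigfcup ?index_enum_uniq // (fsetIidPl IH).
have Fs_H j : (Fs j `<=` H)%fset by apply: bigfcup_sup; rewrite ?mem_index_enum.
have cardH : #|` H| = (\sum_j k j)%N.
  rewrite (card_split H (fsubset_refl H)); apply: eq_bigr => j _.
  by rewrite (fsetIidPr (Fs_H j)) (FsP j).1.
exists H; split.
  apply/seteqP; split=> // x _; have [j jx] := cell_cover x.
  have [h hj] : exists h, h \in Fs j by apply/fset0Pn; rewrite -cardfs_gt0 (FsP j).1.
  have [y Uy hy] := cell_sub_translate (linked_refl j) (Fs_core _ _ hj) jx.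
  by exists h; [exact: (fsubsetP (Fs_H j)) | exists y].
move=> I IH; pose cnt j := #|` I `&` Fs j|%fset.
have cnt_le j : (cnt j <= k j)%N by rewrite -(FsP j).1 fsubset_leq_card // fsubsetIr.
rewrite (card_split _ IH) cardH.
apply: (@le_trans _ _ (\sum_(i | touched par cnt i) mass i)%:E).
  by rewrite lee_fin; exact: quota.
rewrite -nu_bigsetU_cell; apply: le_measure; rewrite ?inE; last exact: touched_cells_sub.
  by apply: bigsetU_measurable => i _; exact: measurable_cell.
by apply: open_measurable; exact: open_setmul.
Qed.

End Cells.
End HaarMeasure.
End TopologicalGroup.

Local Open Scope fset_scope.

Theorem lemma3 (R : realType) (G : ptopologicalType)
    (mul : G -> G -> G) (inv : G -> G) (e : G)
    (nu : {measure set (borel_of G) -> \bar R}) :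
  compact_group mul inv e -> non_discrete G -> normalized_haar mul nu ->
  forall U : set G, open U -> U e ->
  exists H : {fset G},
    setmul mul [set` H] U = [set: G] /\
    (forall I : {fset G}, I `<=` H ->
       ((#|` I|%:R / #|` H|%:R)%:E <= nu (setmul mul [set` I] U))%E).
Proof.
case=> [[mulA mul1g mulVg mul_cont inv_cont] hG cG] nd [nuT nu_translate _ _] U oU Ue.
have sqrt_nbhs := exists_sym_nbhs_sq mulA mul1g mulVg mul_cont inv_cont.
have [W1 [oW1 W1e _ W1U]] := sqrt_nbhs _ oU Ue.
have [W2 [oW2 W2e _ W2W1]] := sqrt_nbhs _ oW1 W1e.
have [W [oW We WV WW2]] := sqrt_nbhs _ oW2 W2e.
have W8U : (setpow mul e W 8 `<=` U)%classic.
  move=> x /(@setpow_double _ _ _ mulA _ _ WW2 4)/(@setpow_double _ _ _ mulA _ _ W2W1 2).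
  move=> /(@setpow_double _ _ _ mulA _ _ W1U 1) [w Uw [_ -> <-]].
  by rewrite (mulg1 mulA mul1g mulVg).
have [s [g [disj maxl]]] :=
  exists_maximal_packing mulA mul1g mulVg mul_cont nuT nu_translate cG oW We.
exact (exists_fair_cover mulA mul1g mulVg mul_cont nuT nu_translate oW We WV W8U
  disj maxl cG hG nd oU).
Qed.
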